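(* Let $q>0$, $q\neq1$, and let $f(x)=\sum_{N=0}^\infty a_Nx^N$ be a formal power series. Then $$e^{-\frac{1}{[2]_q^2}D_x^2}f(x)=\sum_{N=0}^\infty a_N\frac{H_N(x;q)}{[2]_q^N},$$ where the left-hand side is understood termwise, i.e. as $\sum_N a_N\,e^{-\frac{1}{[2]_q^2}D_x^2}x^N$.
   Context: For $n\ge 0$ let $[n]_q=\frac{q^n-1}{q-1}$, $[0]_q!=1$, $[n]_q!=[1]_q\cdots[n]_q$, and $e_q(z)=\sum_{n\ge0}z^n/[n]_q!$. The $q$-derivative acts by $D_x x^n=[n]_qx^{n-1}$, and $e^{aD_x^2}:=\sum_{n\ge0}\frac{a^n}{n!}D_x^{2n}$. The $q$-Hermite polynomials $H_N(x;q)$ are defined by the identity of formal power series in $t$: $e^{-t^2}e_q([2]_q t x)=\sum_{N\ge0}H_N(x;q)\,t^N/[N]_q!$. *)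

From mathcomp Require Import all_boot all_order all_algebra.
Set Implicit Arguments. Unset Strict Implicit. Unset Printing Implicit Defensive.
Import Order.TTheory GRing.Theory Num.Theory.
Local Open Scope ring_scope.

Section QDefs.
Variables (R : realFieldType) (q : R).

Definition qint (n : nat) : R := (q ^+ n - 1) / (q - 1).

Definition qfact (n : nat) : R := \prod_(1 <= i < n.+1) qint i.

(* q-derivative on polynomials: D_x x^n = [n]_q x^(n-1), extended linearly *)
Definition qderiv (p : {poly R}) : {poly R} :=
  \poly_(i < (size p).-1) (qint i.+1 * p`_i.+1).

(* e^{a D_x^2} p = sum_{n>=0} a^n/n! D_x^{2n} p.  For a polynomial p the terms
   with 2n >= size p vanish, so the sum is truncated at n < size p. *)
Definition qexpD2 (a : R) (p : {poly R}) : {poly R} :=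
  \sum_(n < size p) ((a ^+ n) / (n`!)%:R) *: iter (2 * n) qderiv p.

(* Coefficient of t^j in e^{-t^2}. *)
Definition expmsq_coef (j : nat) : R :=
  if odd j then 0 else (-1) ^+ j./2 / (j./2)`!%:R.

(* Coefficient of t^k in e_q([2]_q t x): ([2]_q x)^k / [k]_q!. *)
Definition eq_coef (k : nat) : {poly R} :=
  (qint 2 ^+ k / qfact k) *: 'X^k.

(* H_N(x;q) determined by e^{-t^2} e_q([2]_q t x) = sum_N H_N t^N/[N]_q!,
   i.e. H_N/[N]_q! is the t^N coefficient of the Cauchy product. *)
Definition qHermite (N : nat) : {poly R} :=
  qfact N *: \sum_(k < N.+1) expmsq_coef (N - k) *: eq_coef k.

End QDefs.

(* D_x lowers x^N to [N]_q x^(N-1), so e^{a D_x^2} x^N is the finite sum over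
   2n <= N of a^n/n! [N]_q [N-1]_q ... [N-2n+1]_q x^(N-2n).  With
   a = -1/[2]_q^2 and [N]_q ... [N-2n+1]_q = [N]_q!/[N-2n]_q!, this is, term by
   term, [2]_q^(-N) [N]_q! (-1)^n/n! [2]_q^(N-2n)/[N-2n]_q! x^(N-2n), which is
   [2]_q^(-N) H_N(x;q) after discarding the odd powers of t in e^{-t^2}. *)
From mathcomp Require Import all_boot all_order all_algebra ring.
Set Implicit Arguments. Unset Strict Implicit. Unset Printing Implicit Defensive.
Import Order.TTheory GRing.Theory Num.Theory.
Local Open Scope ring_scope.

Lemma sum_even_half {V : zmodType} (g : nat -> V) (N : nat) :
  \sum_(j < N.+1) (if odd j then 0 else g j./2) = \sum_(n < N./2.+1) g n.
Proof.
elim: N => [|N IH]; first by rewrite !big_ord1.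
rewrite big_ord_recr /= IH uphalf_half; case: (odd N) => /=.
- by rewrite add1n [RHS]big_ord_recr.
- by rewrite add0n addr0.
Qed.

Section QCalculus.
Variables (R : realFieldType) (q : R).

Lemma qint0 : qint q 0 = 0.
Proof. by rewrite /qint expr0 subrr mul0r. Qed.

Lemma qderiv0 : qderiv q 0 = 0.
Proof. by rewrite /qderiv size_poly0 poly_def big_ord0. Qed.

Lemma qderiv_scale_Xn (c : R) (N : nat) :
  qderiv q (c *: 'X^N) = (c * qint q N) *: 'X^(N.-1).
Proof.
have [->|c0] := eqVneq c 0; first by rewrite mul0r !scale0r qderiv0.
apply/polyP => i.
rewrite coef_poly !coefZ !coefXn size_scale // size_polyXn /=.
case: N => [|M] /=; first by rewrite qint0 mulr0 mul0r.
case: ltnP => [i_lt_M | M_le_i]; last by rewrite (gtn_eqF M_le_i) mulr0.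
by rewrite eqSS; case: eqP => [-> | _]; rewrite ?mulr0 // !mulr1 mulrC.
Qed.

Lemma iter_qderiv_Xn (m N : nat) :
  iter m (qderiv q) 'X^N = (\prod_(i < m) qint q (N - i)) *: 'X^(N - m).
Proof.
elim: m => [|m IH]; first by rewrite big_ord0 scale1r subn0.
by rewrite iterS IH qderiv_scale_Xn big_ord_recr /= subnS.
Qed.

Lemma qfactS (n : nat) : qfact q n.+1 = qfact q n * qint q n.+1.
Proof. by rewrite /qfact big_nat_recr. Qed.

Lemma qfact_falling (m N : nat) : (m <= N)%N ->
  qfact q N = (\prod_(i < m) qint q (N - i)) * qfact q (N - m).
Proof.
elim: m => [|m IH] m_lt_N; first by rewrite big_ord0 mul1r subn0.
rewrite IH 1?ltnW // big_ord_recr /= -mulrA; congr (_ * _).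
by rewrite -(subnSK m_lt_N) qfactS mulrC.
Qed.

Lemma qexpD2_Xn (a : R) (N : nat) :
  qexpD2 q a 'X^N =
  \sum_(n < N./2.+1)
     (a ^+ n / n`!%:R * \prod_(i < 2 * n) qint q (N - i)) *: 'X^(N - 2 * n).
Proof.
pose F n := (a ^+ n / n`!%:R * \prod_(i < 2 * n) qint q (N - i)) *: 'X^(N - 2 * n).
rewrite (big_ord_widen N.+1 F) ?big_mkcond; last first.
  by rewrite ltnS leq_half_double; apply: leqW; rewrite -addnn leq_addr.
rewrite /qexpD2 size_polyXn; apply: eq_bigr => n _.
rewrite iter_qderiv_Xn scalerA /F; case: ltnP => // half_lt_n.
have N_lt_2n : (N < 2 * n)%N by rewrite mul2n -ltn_half_double.
by rewrite (bigD1 (Ordinal N_lt_2n)) //= subnn qint0 !(mul0r, mulr0) !scale0r.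
Qed.

Lemma qHermiteE (N : nat) :
  qHermite q N =
  qfact q N *: \sum_(n < N./2.+1) ((-1) ^+ n / n`!%:R) *: eq_coef q (N - 2 * n).
Proof.
pose g n := ((-1) ^+ n / n`!%:R) *: eq_coef q (N - 2 * n).
rewrite /qHermite -(sum_even_half g) [in LHS](reindex_inj rev_ord_inj) /=.
congr (_ *: _); apply: eq_bigr => j _.
rewrite subSS subKn ?leq_ord // /expmsq_coef /g.
case: ifP => [_ | even_j]; first by rewrite scale0r.
by rewrite mul2n even_halfK ?even_j.
Qed.

Hypotheses (q_gt0 : 0 < q) (q_neq1 : q != 1).

Lemma qint_neq0 (i : nat) : (0 < i)%N -> qint q i != 0.
Proof.
move=> i_gt0; rewrite /qint mulf_neq0 // ?invr_eq0 subr_eq0 //.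
by rewrite pexpr_eq1 // ltW.
Qed.

Lemma qfact_neq0 (n : nat) : qfact q n != 0.
Proof.
elim: n => [|n IH]; first by rewrite /qfact big_geq // oner_neq0.
by rewrite qfactS mulf_neq0 // qint_neq0.
Qed.

End QCalculus.

Theorem mainTheorem10 (R : realFieldType) (q : R) (hq0 : 0 < q) (hq1 : q != 1)
    (a : nat -> R) :
  forall N : nat,
    a N *: qexpD2 q (- (qint q 2 ^+ 2)^-1) 'X^N
    = a N *: ((qint q 2 ^+ N)^-1 *: qHermite q N).
Proof.
move=> N; congr (_ *: _).
rewrite qexpD2_Xn qHermiteE scalerA !scaler_sumr; apply: eq_bigr => n _.
have le_2n_N : (2 * n <= N)%N by rewrite mul2n -geq_half_double -ltnS.
rewrite /eq_coef !scalerA (qfact_falling q le_2n_N); congr (_ *: _).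
set t := qint q 2.
have t_neq0 : t != 0 by apply: qint_neq0.
have tN : t ^+ N = t ^+ (N - 2 * n) * t ^+ 2 ^+ n by rewrite -exprM -exprD subnK.
rewrite tN (exprNn (t ^- 2)) exprVn.
have fact_neq0 : n`!%:R != 0 :> R by rewrite pnatr_eq0 -lt0n fact_gt0.
have qfact_rest_neq0 := qfact_neq0 hq0 hq1 (N - 2 * n).
by field; rewrite fact_neq0 qfact_rest_neq0 !expf_neq0.
Qed.
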